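(* Let $n\ge2$, $m\ge1$, $0<\alpha_1\le\dots\le\alpha_m$ with $\sum\alpha_j=1$, and let $(A,\tau)=(\mathbb{C}p_1\oplus\cdots\oplus\mathbb{C}p_m,\tau_1)*(\mathbb{M}_n,tr_n)$ be the reduced free product ($\tau_1(p_j)=\alpha_j$). Let $\{e_{ij}\}$ be matrix units of $\mathbb{M}_n\subset A$ and $u=\sum_{i=1}^{n-1}e_{i,i+1}+e_{n,1}$. Let $l$ be an integer with $l\mid n$, $1<l<n$ (for part (ii)). Then: (i) The family consisting of the $n+1$ subalgebras $C^*(u^kp_1u^{-k},\dots,u^kp_mu^{-k})$, $k=0,\dots,n-1$, and $C^*(e_{11},\dots,e_{nn})$ is free in $(A,\tau)$. More generally, if $\omega\in\Lambda^\circ\big(C^*(p_1,\dots,p_m)^\circ,\dots,C^*(u^{n-1}p_1u^{1-n},\dots,u^{n-1}p_mu^{1-n})^\circ,C^*(e_{11},\dots,e_{nn})^\circ\big)$, then $\tau(\omega u^r)=0$ for all $0\le r\le n-1$. (ii) The family consisting of the $l+1$ subalgebras $C^*(u^kp_1u^{-k},\dots,u^kp_mu^{-k})$, $k=0,\dots,l-1$, and $C^*(e_{11},\dots,e_{nn},u^l,u^{2l},\dots,u^{n-l})$ is free in $(A,\tau)$. More generally, if $\omega\in\Lambda^\circ\big(C^*(p_1,\dots,p_m)^\circ,\dots,C^*(u^{l-1}p_1u^{1-l},\dots,u^{l-1}p_mu^{1-l})^\circ,C^*(e_{11},\dots,e_{nn},u^l,\dots,u^{n-l})^\circ\big)$,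 then $\tau(\omega u^r)=0$ for all $0\le r\le l-1$.
   Context: Reduced free product: the unique unital $C^*$-algebra with state generated by unital copies of the factors, restricting to the given traces, in which they are free, with faithful GNS representation; here $\tau$ is a faithful trace. A family of unital $C^*$-subalgebras $D_i$ is free in $(A,\tau)$ if $\tau(d_1\cdots d_r)=0$ whenever $d_s\in D_{i_s}$, $i_1\ne i_2\ne\dots\ne i_r$, and $\tau(d_s)=0$ for all $s$. For a unital subalgebra $D$, $D^\circ=\{d\in D:\tau(d)=0\}$. For unital subalgebras $D_1,\dots,D_k$, $\Lambda^\circ(D_1^\circ,\dots,D_k^\circ)$ is the set of all products $d_1d_2\cdots d_j$ of nonzero length with $d_t\in D_{i_t}^\circ$ and $i_t\ne i_{t+1}$ for $1\le t\le j-1$. *)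

From mathcomp Require Import all_boot all_order all_algebra.
From mathcomp Require Import reals complex.
Import GRing.Theory Num.Theory.
Set Implicit Arguments. Unset Strict Implicit. Unset Printing Implicit Defensive.
Local Open Scope ring_scope.
Local Open Scope complex_scope.

Section CStar.
Variables (R : realType) (A : algType R[i]).
Variables (star : A -> A) (nrm : A -> R).

Definition is_cstar_algebra : Prop :=
  (forall x, star (star x) = x) /\
  (forall x y, star (x + y) = star x + star y) /\
  (forall (c : R[i]) x, star (c *: x) = c^* *: star x) /\
  (forall x y, star (x * y) = star y * star x) /\
  (forall x, 0 <= nrm x) /\ (forall x, nrm x = 0 -> x = 0) /\
  (forall x y, nrm (x + y) <= nrm x + nrm y) /\
  (forall (c : R[i]) x, (nrm (c *: x))%:C = `|c| * (nrm x)%:C) /\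
  (forall x y, nrm (x * y) <= nrm x * nrm y) /\
  (forall x, nrm (star x * x) = nrm x ^+ 2) /\
      (forall s : nat -> A,
         (forall e : R, 0 < e -> exists N, forall k l, (N <= k)%N -> (N <= l)%N ->
              nrm (s k - s l) < e) ->
         exists x, forall e : R, 0 < e -> exists N, forall k, (N <= k)%N ->
              nrm (s k - x) < e).

Definition closed_star_subalg (D : A -> Prop) : Prop :=
  D 1 /\
  (forall x y, D x -> D y -> D (x + y)) /\
  (forall (c : R[i]) x, D x -> D (c *: x)) /\
  (forall x y, D x -> D y -> D (x * y)) /\
  (forall x, D x -> D (star x)) /\
      (forall (s : nat -> A) x, (forall k, D (s k)) ->
         (forall e : R, 0 < e -> exists N, forall k, (N <= k)%N -> nrm (s k - x) < e) ->
         D x).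

Definition cstar_gen (S : A -> Prop) : A -> Prop :=
  fun x => forall D, closed_star_subalg D -> (forall y, S y -> D y) -> D x.

Variable tau : A -> R[i].

Definition faithful_trace : Prop :=
  (forall x y, tau (x + y) = tau x + tau y) /\
  (forall (c : R[i]) x, tau (c *: x) = c * tau x) /\
  tau 1 = 1 /\
  (forall x y, tau (x * y) = tau (y * x)) /\
  (forall x, 0 <= tau (star x * x)) /\
  (forall x, tau (star x * x) = 0 -> x = 0).

Definition word_prod (I : Type) (w : seq (I * A)) : A :=
  foldr (fun p acc => p.2 * acc) 1 w.

Fixpoint alternating (I : Type) (w : seq (I * A)) : Prop :=
  match w with
  | p :: ((q :: _) as t) => p.1 <> q.1 /\ alternating t
  | _ => True
  end.

Fixpoint all_letters (I : Type) (P : I * A -> Prop) (w : seq (I * A)) : Prop :=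
  match w with
  | [::] => True
  | p :: t => P p /\ all_letters P t
  end.

(* w is an element of Lambda°(D_i^°): nonempty alternating word of
   centred elements d_t \in D_{i_t}^° *)
Definition in_Lambda0 (I : Type) (D : I -> A -> Prop) (w : seq (I * A)) : Prop :=
  [/\ w <> [::], alternating w & all_letters (fun p => D p.1 p.2 /\ tau p.2 = 0) w].

Definition free_family (I : Type) (D : I -> A -> Prop) : Prop :=
  forall w, in_Lambda0 D w -> tau (word_prod w) = 0.

End CStar.

(* Conjugating by the cyclic shift [u] untwists the letters [u^k d u^-k]
   (d centred in C*(p)) of a word in the twisted copies and the diagonal-type
   subalgebra: the word times [u^r] becomes [u^k1 d1 M1 d2 M2 ... ds Z] with all
   [Mi] and [Z] in C*(e), where [Mi = u^-k b u^k'] and [b] is [1] or the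
   diagonal-type letter between two twisted ones.  Such [b] maps the span of the
   [e i i] with [i] in a residue class mod [l] into itself while [u^j] shifts
   these classes by [j], so [tau (b u^j) = 0] unless [l | j]; as [0 <= k, k' < l]
   this makes [Mi] centred (when [k = k'], alternation forces [b] centred).
   Moving [u^k1] around the trace and writing [Z] as its centred part plus
   [tau Z], freeness of C*(p) and C*(e) kills both terms. *)

From mathcomp Require Import all_boot all_order all_algebra.
From mathcomp Require Import reals complex.
From mathcomp Require Import lra.
Import Order.TTheory GRing.Theory Num.Theory.
Set Implicit Arguments. Unset Strict Implicit. Unset Printing Implicit Defensive.
Local Open Scope ring_scope.
Local Open Scope complex_scope.

Section StarAlgebra.
Variables (R : realType) (A : algType R[i]) (star : A -> A) (nrm : A -> R).

Definition converges (s : nat -> A) (x : A) : Prop :=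
  forall eps : R, 0 < eps -> exists N, forall k, (N <= k)%N -> nrm (s k - x) < eps.

Section ClosedSubalgebra.
Variables (D : A -> Prop) (hD : closed_star_subalg star nrm D).

Lemma subalg1 : D 1. Proof. by case: hD. Qed.
Lemma subalgD x y : D x -> D y -> D (x + y). Proof. by case: hD => _ [h _]; apply: h. Qed.
Lemma subalgZ c x : D x -> D (c *: x). Proof. by case: hD => _ [_ [h _]]; apply: h. Qed.
Lemma subalgM x y : D x -> D y -> D (x * y).
Proof. by case: hD => _ [_ [_ [h _]]]; apply: h. Qed.
Lemma subalg_star x : D x -> D (star x). Proof. by case: hD => _ [_ [_ [_ [h _]]]]; apply: h. Qed.
Lemma subalg_lim s x : (forall k, D (s k)) -> converges s x -> D x.
Proof. by case: hD => _ [_ [_ [_ [_ h]]]]; apply: h. Qed.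

Lemma subalgB x y : D x -> D y -> D (x - y).
Proof. by move=> Dx Dy; rewrite -scaleN1r; apply/subalgD/subalgZ. Qed.

Lemma subalgX x k : D x -> D (x ^+ k).
Proof.
move=> Dx; elim: k => [|k IHk]; first by rewrite expr0; apply: subalg1.
by rewrite exprS; apply: subalgM.
Qed.

Lemma subalg_sum (I : finType) (F : I -> A) : (forall i, D (F i)) -> D (\sum_i F i).
Proof.
move=> DF; apply: big_ind => //; last exact: subalgD.
by rewrite -(scale0r 1); apply/subalgZ/subalg1.
Qed.

End ClosedSubalgebra.

Lemma closed_star_subalgI D1 D2 :
  closed_star_subalg star nrm D1 -> closed_star_subalg star nrm D2 ->
  closed_star_subalg star nrm (fun x => D1 x /\ D2 x).
Proof.
move=> hD1 hD2; split; [|split; [|split; [|split; [|split]]]].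
- by split; apply: subalg1.
- by move=> x y [D1x D2x] [D1y D2y]; split; apply: subalgD.
- by move=> c x [D1x D2x]; split; apply: subalgZ.
- by move=> x y [D1x D2x] [D1y D2y]; split; apply: subalgM.
- by move=> x [D1x D2x]; split; apply: subalg_star.
- by move=> s x Ds cvg; split; apply: subalg_lim cvg => // k; case: (Ds k).
Qed.

Lemma cstar_gen_closed S : closed_star_subalg star nrm (cstar_gen star nrm S).
Proof.
split; [|split; [|split; [|split; [|split]]]].
- by move=> D /subalg1.
- by move=> x y Sx Sy D hD hS; apply: subalgD; [|apply: Sx|apply: Sy].
- by move=> c x Sx D hD hS; apply: subalgZ; [|apply: Sx].
- by move=> x y Sx Sy D hD hS; apply: subalgM; [|apply: Sx|apply: Sy].
- by move=> x Sx D hD hS; apply: subalg_star; [|apply: Sx].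
- by move=> s x Ss cvg D hD hS; apply: (subalg_lim hD) cvg => k; apply: Ss.
Qed.

Lemma cstar_gen_mem (S : A -> Prop) x : S x -> cstar_gen star nrm S x.
Proof. by move=> Sx D _; apply. Qed.

Lemma cstar_gen_min S D x : closed_star_subalg star nrm D -> (forall y, S y -> D y) ->
  cstar_gen star nrm S x -> D x.
Proof. by move=> hD SD; apply. Qed.

Hypothesis hA : is_cstar_algebra star nrm.

Lemma starK x : star (star x) = x. Proof. by case: hA. Qed.
Lemma starD x y : star (x + y) = star x + star y. Proof. by case: hA => _ []. Qed.
Lemma starM x y : star (x * y) = star y * star x. Proof. by case: hA => _ [_ [_ []]]. Qed.

Lemma star0 : star 0 = 0.
Proof. by apply: (addIr (star 0)); rewrite -starD !add0r. Qed.

Lemma star1 : star 1 = 1.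
Proof. by rewrite -[LHS]mulr1 -[X in _ * X]starK -starM mulr1 starK. Qed.

Lemma starX x k : star (x ^+ k) = star x ^+ k.
Proof. by elim: k => [|k IHk]; rewrite ?star1 // exprS starM IHk exprSr. Qed.

Lemma star_sum (I : finType) (F : I -> A) : star (\sum_i F i) = \sum_i star (F i).
Proof. exact: (big_morph star starD star0). Qed.

Lemma nrm_ge0 x : 0 <= nrm x. Proof. by case: hA => _ [_ [_ [_ []]]]. Qed.
Lemma nrm_eq0 x : nrm x = 0 -> x = 0.
Proof. by case: hA => _ [_ [_ [_ [_ [h _]]]]]; apply: h. Qed.
Lemma nrmM x y : nrm (x * y) <= nrm x * nrm y.
Proof. by case: hA => _ [_ [_ [_ [_ [_ [_ [_ [h _]]]]]]]]; apply: h. Qed.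

Lemma converges_cst_eq s x y : (forall k, s k = y) -> converges s x -> x = y.
Proof.
move=> sE cvg; apply/eqP; rewrite eq_sym -subr_eq0; apply/eqP/nrm_eq0.
apply/eqP; rewrite eq_le nrm_ge0 andbT; apply/ler_addgt0Pr => eps eps_gt0.
by have [N /(_ N (leqnn N))] := cvg eps eps_gt0; rewrite sE add0r => /ltW.
Qed.

Lemma converges_mul2 a b s x :
  converges s x -> converges (fun k => a * s k * b) (a * x * b).
Proof.
move=> cvg eps eps_gt0; set K := nrm a * nrm b + 1.
have K_gt0 : 0 < K by rewrite /K; have := nrm_ge0 a; have := nrm_ge0 b; nra.
have [N cvgN] := cvg (eps / K) (divr_gt0 eps_gt0 K_gt0).
exists N => k /cvgN; set y := nrm (s k - x) => y_lt; rewrite -mulrBl -mulrBr.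
have yK_lt : y * K < eps by rewrite -ltr_pdivlMr.
apply: (le_lt_trans (nrmM _ _)); apply: (@le_lt_trans _ _ (nrm a * y * nrm b)).
  by rewrite ler_wpM2r ?nrm_ge0 // (le_trans (nrmM _ _)) // ler_wpM2l ?nrm_ge0.
have := nrm_ge0 a; have := nrm_ge0 b; have := nrm_ge0 (s k - x).
rewrite /K -/y in yK_lt *; nra.
Qed.

Lemma closed_star_subalg_conj D v : closed_star_subalg star nrm D ->
  v * star v = 1 -> star v * v = 1 ->
  closed_star_subalg star nrm (fun x => D (star v * x * v)).
Proof.
move=> hD vsv svv; split; [|split; [|split; [|split; [|split]]]] => /=.
- by rewrite mulr1 svv; apply: subalg1.
- by move=> x y Dx Dy; rewrite mulrDr mulrDl; apply: subalgD.
- by move=> c x Dx; rewrite -scalerAr -scalerAl; apply: subalgZ.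
- move=> x y Dx Dy; suff -> : star v * (x * y) * v = (star v * x * v) * (star v * y * v).
    exact: subalgM.
  by rewrite -!mulrA (mulrA v) vsv mul1r.
- by move=> x /(subalg_star hD); rewrite !starM starK mulrA.
- by move=> s x Ds /(converges_mul2 (star v) v); apply: subalg_lim.
Qed.

End StarAlgebra.

Section Trace.
Variables (R : realType) (A : algType R[i]) (star : A -> A) (tau : A -> R[i]).
Hypothesis htau : faithful_trace star tau.

Lemma tauD x y : tau (x + y) = tau x + tau y. Proof. by case: htau. Qed.
Lemma tauZ c x : tau (c *: x) = c * tau x. Proof. by case: htau => _ []. Qed.
Lemma tau1 : tau 1 = 1. Proof. by case: htau => _ [_ []]. Qed.
Lemma tauC x y : tau (x * y) = tau (y * x). Proof. by case: htau => _ [_ [_ []]]. Qed.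

Lemma tau0 : tau 0 = 0. Proof. by rewrite -(scale0r 0) tauZ mul0r. Qed.

Lemma tau_sum (I : finType) (F : I -> A) : tau (\sum_i F i) = \sum_i tau (F i).
Proof. exact: (big_morph tau tauD tau0). Qed.

Lemma tau_centred x : tau (x - tau x *: 1) = 0.
Proof. by rewrite tauD -scaleNr tauZ tau1 mulr1 subrr. Qed.

End Trace.

Section AlternatingWords.
Variables (R : realType) (A : algType R[i]) (tau : A -> R[i]) (I : Type).
Variable D : I -> A -> Prop.

Lemma in_Lambda0_cons i x a w : in_Lambda0 tau D (a :: w) -> i <> a.1 ->
  D i x -> tau x = 0 -> in_Lambda0 tau D ((i, x) :: a :: w).
Proof. by case=> _ alt_w all_w ia Dx tx. Qed.

Lemma in_Lambda0_behead a b w : in_Lambda0 tau D (a :: b :: w) -> in_Lambda0 tau D (b :: w).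
Proof. by case=> _ [_ alt_w] [_ all_w]. Qed.

End AlternatingWords.

Definition pair_family (A : Type) (P E : A -> Prop) (b : bool) : A -> Prop :=
  if b then P else E.

Section FreePair.
Variables (R : realType) (A : algType R[i]) (star : A -> A) (nrm : A -> R).
Variables (tau : A -> R[i]) (P E : A -> Prop).
Hypothesis htau : faithful_trace star tau.
Hypothesis hE : closed_star_subalg star nrm E.
Hypothesis hfree : free_family tau (pair_family P E).

Lemma tau_mul_alt_word Z d w : E Z ->
  in_Lambda0 tau (pair_family P E) ((true, d) :: w) ->
  tau (Z * word_prod ((true, d) :: w)) = 0.
Proof.
move=> EZ Ldw; set Z0 := Z - tau Z *: 1.
have EZ0 : E Z0 by apply/(subalgB hE EZ)/(subalgZ hE)/(subalg1 hE).
have -> : Z = Z0 + tau Z *: 1 by rewrite subrK.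
rewrite mulrDl -scalerAl mul1r (tauD htau) (tauZ htau) (hfree Ldw) mulr0 addr0.
have := hfree (w := (false, Z0) :: (true, d) :: w); apply.
exact: in_Lambda0_cons (tau_centred htau Z).
Qed.

End FreePair.

Lemma dvdn_shift_eq l n k k' : (l %| n)%N -> (k < l)%N -> (k' < l)%N -> (k <= n)%N ->
  (l %| k' + (n - k))%N -> k' = k.
Proof.
move=> l_n lt_kl lt_k'l le_kn; rewrite /dvdn => /eqP k'_mod.
have : (k' + (n - k) == k + (n - k) %[mod l])%N by rewrite k'_mod subnKC // (eqP l_n).
by rewrite eqn_modDr !modn_small // => /eqP.
Qed.

Section MatrixUnits.
Variables (R : realType) (n : nat) (A : algType R[i]) (star : A -> A) (nrm : A -> R).
Hypothesis hA : is_cstar_algebra star nrm.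
Variable e : 'I_n -> 'I_n -> A.
Hypothesis he_mul : forall i j k l, e i j * e k l = if j == k then e i l else 0.
Hypothesis he_star : forall i j, star (e i j) = e j i.
Hypothesis he_sum : \sum_(i < n) e i i = 1.

Definition cycle_shift := \sum_(i < n) e i (ordS i).
Local Notation u := cycle_shift.

Definition ord_shift (s : nat) (i : 'I_n) : 'I_n := iter s (@ordS n) i.

Lemma ord_shiftE s i : val (ord_shift s i) = ((i + s) %% n)%N.
Proof.
elim: s => [|s IHs]; first by rewrite addn0 modn_small.
by rewrite /ord_shift iterS /= -/(ord_shift s i) IHs -addn1 modnDml addn1 addnS.
Qed.

Lemma mul_unit_sum i j (f : 'I_n -> 'I_n) : e i j * \sum_k e k (f k) = e i (f j).
Proof.
rewrite mulr_sumr (bigD1 j) //= he_mul eqxx big1 ?addr0 // => k /negbTE kj.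
by rewrite he_mul eq_sym kj.
Qed.

Lemma cycle_shiftX s : u ^+ s = \sum_i e i (ord_shift s i).
Proof.
elim: s => [|s IHs]; first by rewrite expr0 -he_sum.
by rewrite exprSr IHs mulr_suml; apply: eq_bigr => i _; rewrite mul_unit_sum.
Qed.

Lemma cycle_shiftXn : u ^+ n = 1.
Proof.
rewrite cycle_shiftX -he_sum; apply: eq_bigr => i _; congr (e i _); apply: val_inj.
by rewrite ord_shiftE modnDr modn_small.
Qed.

Lemma cycle_shift_unitary : u * star u = 1.
Proof.
have -> : star u = \sum_i e i (ord_pred i).
  rewrite (star_sum hA) [RHS](reindex_inj (@ordS_inj n)) /=.
  by apply: eq_bigr => i _; rewrite he_star ordSK.
rewrite mulr_suml -he_sum; apply: eq_bigr => i _.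
by rewrite mul_unit_sum ordSK.
Qed.

Lemma cycle_shiftX_mul_star k : u ^+ k * star u ^+ k = 1.
Proof.
elim: k => [|k IHk]; first by rewrite !expr0 mulr1.
by rewrite exprSr exprS -mulrA (mulrA u) cycle_shift_unitary mul1r.
Qed.

Lemma star_cycle_shiftX k : (k <= n)%N -> star u ^+ k = u ^+ (n - k).
Proof.
move=> le_kn; rewrite -[LHS]mul1r -cycle_shiftXn -{1}(subnK le_kn) exprD.
by rewrite -mulrA cycle_shiftX_mul_star mulr1.
Qed.

Lemma star_cycle_shiftX_mul k : (k <= n)%N -> star u ^+ k * u ^+ k = 1.
Proof. by move=> le_kn; rewrite star_cycle_shiftX // -exprD subnK ?cycle_shiftXn. Qed.

Lemma ord_shift_modE l s i : (l %| n)%N -> (ord_shift s i %% l = (i + s) %% l)%N.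
Proof. by move=> l_n; rewrite ord_shiftE modn_dvdm. Qed.

Definition residue_block (l : nat) (b : A) : Prop :=
  forall i j : 'I_n, (i %% l != j %% l)%N -> e i i * b * e j j = 0.

Lemma residue_block_closed l : closed_star_subalg star nrm (residue_block l).
Proof.
split; [|split; [|split; [|split; [|split]]]].
- by move=> i j ij; rewrite mulr1 he_mul; have [eij|] := eqVneq i j; rewrite // eij eqxx in ij.
- by move=> x y Bx By i j ij; rewrite mulrDr mulrDl Bx // By // addr0.
- by move=> c x Bx i j ij; rewrite -scalerAr -scalerAl Bx // scaler0.
- move=> x y Bx By i j ij.
  have -> : x * y = x * (\sum_k e k k) * y by rewrite he_sum mulr1.
  rewrite mulr_sumr mulr_suml mulr_sumr mulr_suml big1 // => k _.
  have [ik|ik] := eqVneq (i %% l)%N (k %% l)%N; last by rewrite !mulrA Bx // !mul0r.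
  have kj : (k %% l != j %% l)%N by rewrite -ik.
  suff -> : e i i * (x * e k k * y) * e j j = e i i * x * e k k * (e k k * y * e j j).
    by rewrite By // mulr0.
  by rewrite !mulrA -(mulrA _ (e k k) (e k k)) he_mul eqxx.
- move=> x Bx i j ij; rewrite -[e i i]he_star -[e j j]he_star -!(starM hA) mulrA.
  by rewrite Bx ?(star0 hA) // eq_sym.
- move=> s x Bs cvg i j ij.
  apply: (converges_cst_eq hA (s := fun k => e i i * s k * e j j)) => [k|].
    exact: Bs k i j ij.
  exact: converges_mul2 hA _ _ _ _ cvg.
Qed.

Lemma residue_block_unit l k : residue_block l (e k k).
Proof.
move=> i j ij; rewrite he_mul; have [<-|_] := eqVneq i k; last by rewrite mul0r.
by rewrite he_mul; have [eij|//] := eqVneq i j; rewrite eij eqxx in ij.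
Qed.

Lemma residue_block_cycle_shiftX l s :
  (l %| n)%N -> (l %| s)%N -> residue_block l (u ^+ s).
Proof.
move=> l_n l_s i j ij; rewrite cycle_shiftX mulr_sumr mulr_suml big1 // => k _.
rewrite he_mul; have [<-|_] := eqVneq i k; last by rewrite mul0r.
rewrite he_mul; have [sij|//] := eqVneq (ord_shift s i) j.
move: ij; rewrite -sij ord_shift_modE //.
by case/dvdnP: l_s => c ->; rewrite addnC modnMDl eqxx.
Qed.

Variable tau : A -> R[i].
Hypothesis htau : faithful_trace star tau.

Lemma tau_residue_block_cycle_shiftX l b s :
  (l %| n)%N -> residue_block l b -> ~~ (l %| s)%N -> tau (b * u ^+ s) = 0.
Proof.
move=> l_n Bb l_s; rewrite cycle_shiftX mulr_sumr (tau_sum htau) big1 // => i _.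
set j := ord_shift s i.
have ji : (j %% l != i %% l)%N.
  rewrite ord_shift_modE //; apply: contra l_s; rewrite -{2}[val i]addn0.
  by rewrite eqn_modDl mod0n.
have -> : b * e i j = b * e i i * e i j * e j j.
  by rewrite -!mulrA he_mul eqxx he_mul eqxx.
by rewrite (tauC htau) !mulrA Bb // !mul0r (tau0 htau).
Qed.

Local Notation E := (cstar_gen star nrm (fun x => exists i j, x = e i j)).
Let hE := cstar_gen_closed star nrm (fun x => exists i j, x = e i j).

Lemma cycle_shiftX_in k : E (u ^+ k).
Proof.
apply: (subalgX hE); apply: (subalg_sum hE) => i.
by apply: cstar_gen_mem; exists i, (ordS i).
Qed.

Lemma star_cycle_shiftX_in k : E (star u ^+ k).
Proof. by rewrite -(starX hA); apply: (subalg_star hE); apply: cycle_shiftX_in. Qed.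

Section Twisting.
Variables (m : nat) (p : 'I_m -> A).

Local Notation P := (cstar_gen star nrm (fun x => exists j, x = p j)).

Hypothesis hfree : free_family tau (pair_family P E).

Let hP := cstar_gen_closed star nrm (fun x => exists j, x = p j).

Lemma conj_letter k x : (k <= n)%N ->
  cstar_gen star nrm (fun y => exists j, y = u ^+ k * p j * star u ^+ k) x ->
  exists d, [/\ P d, tau d = tau x & x = u ^+ k * d * star u ^+ k].
Proof.
move=> le_kn Px; have uu := cycle_shiftX_mul_star k.
have uu' := star_cycle_shiftX_mul le_kn.
exists (star u ^+ k * x * u ^+ k); split.
- rewrite -(starX hA).
  apply: (cstar_gen_min (D := fun y => P (star (u ^+ k) * y * u ^+ k)) _ _ Px).
    by apply: (closed_star_subalg_conj hA hP); rewrite (starX hA).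
  move=> _ [j ->]; rewrite (starX hA) !mulrA uu' mul1r -mulrA uu' mulr1.
  by apply: cstar_gen_mem; exists j.
- by rewrite (tauC htau) mulrA uu mul1r.
- by rewrite !mulrA uu mul1r -mulrA uu mulr1.
Qed.

Hypothesis n_gt0 : (0 < n)%N.
Variable l : nat.
Hypothesis l_n : (l %| n)%N.

Let le_ln : (l <= n)%N := dvdn_leq n_gt0 l_n.

Lemma tau_twisted b (k k' : nat) : residue_block l b -> (k = k' -> tau b = 0) ->
  (k < l)%N -> (k' < l)%N -> tau (star u ^+ k * b * u ^+ k') = 0.
Proof.
move=> Bb tb lt_kl lt_k'l; have le_kn : (k <= n)%N by apply: leq_trans (ltnW lt_kl) le_ln.
rewrite -mulrA (tauC htau) -mulrA star_cycle_shiftX // -exprD.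
have [eq_kk'|neq_kk'] := eqVneq k k'.
  by rewrite -eq_kk' subnKC // cycle_shiftXn mulr1 tb.
apply: (tau_residue_block_cycle_shiftX l_n Bb).
by apply: contra neq_kk' => /(dvdn_shift_eq l_n lt_kl lt_k'l le_kn)/eqP; rewrite eq_sym.
Qed.

Variable G : option 'I_l -> A -> Prop.
Hypothesis hGS : forall (k : 'I_l) x, G (Some k) x ->
  cstar_gen star nrm (fun y => exists j, y = u ^+ k * p j * star u ^+ k) x.
Hypothesis hGN : forall x, G None x -> E x /\ residue_block l x.

Lemma untwist_word (k : 'I_l) x rest T :
  in_Lambda0 tau G ((Some k, x) :: rest) -> E T ->
  exists d w Z, [/\ in_Lambda0 tau (pair_family P E) ((true, d) :: w), E Z &
    word_prod ((Some k, x) :: rest) * T = u ^+ k * word_prod ((true, d) :: w) * Z].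
Proof.
have [N] := ubnP (size rest); elim: N => // N IHN in k x rest *.
move=> lt_rest Lw ET; have [_ alt_w [[Gx tx] _]] := Lw; rewrite /= in Gx tx.
have le_kn : (k <= n)%N by apply: leq_trans (ltnW (ltn_ord k)) le_ln.
have [d [Pd td xE]] := conj_letter le_kn (hGS Gx); rewrite tx in td.
case: rest => [|[[k'|] y] rest] in lt_rest Lw alt_w *.
- exists d, [::], (star u ^+ k * T); split => //.
    by apply: (subalgM hE) => //; apply: star_cycle_shiftX_in.
  by rewrite xE /= !mulr1 !mulrA.
- have [d' [w [Z [Lw' EZ wE]]]] := IHN k' y rest lt_rest (in_Lambda0_behead Lw) ET.
  exists d, ((false, star u ^+ k * u ^+ k') :: (true, d') :: w), Z; split => //.
    apply: in_Lambda0_cons => //; apply: in_Lambda0_cons => //.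
      by apply: (subalgM hE); [apply: star_cycle_shiftX_in|apply: cycle_shiftX_in].
    rewrite -[star u ^+ k]mulr1; apply: tau_twisted => //.
      exact: subalg1 (residue_block_closed l).
    by move/val_inj=> kk'; case: alt_w; rewrite kk'.
  by rewrite /= -mulrA -/(word_prod ((Some k', y) :: rest)) wE xE !mulrA.
- have [_ _ [_ [[/= Gy ty] _]]] := Lw.
  have [EyN ByN] := hGN Gy.
  have Ey : E (star u ^+ k * y) by apply: (subalgM hE (star_cycle_shiftX_in k)).
  case: rest => [|[[k'|] z] rest] in lt_rest Lw alt_w *; last by case: alt_w => _ [].
    exists d, [::], (star u ^+ k * y * T); split => //; first exact: (subalgM hE).
    by rewrite xE /= !mulr1 !mulrA.
  have Lw' := in_Lambda0_behead (in_Lambda0_behead Lw).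
  have [d' [w [Z [Lw'' EZ wE]]]] := IHN k' z rest (ltnW lt_rest) Lw' ET.
  exists d, ((false, star u ^+ k * y * u ^+ k') :: (true, d') :: w), Z; split => //.
    apply: in_Lambda0_cons => //; apply: in_Lambda0_cons => //.
      by apply: (subalgM hE Ey); apply: cycle_shiftX_in.
    exact: tau_twisted.
  transitivity (x * (y * (word_prod ((Some k', z) :: rest) * T))); first by rewrite /= !mulrA.
  by rewrite wE xE /= !mulrA.
Qed.

Lemma tau_word_cycle_shiftX w :
  in_Lambda0 tau G w -> forall r, (r < l)%N -> tau (word_prod w * u ^+ r) = 0.
Proof.
move=> Lw r lt_rl; have Er := cycle_shiftX_in r.
case: w Lw => [[]//|[[k|] x] rest] Lw.
  have [d [w [Z [Lw' EZ ->]]]] := untwist_word Lw Er.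
  rewrite (tauC htau) mulrA; apply: (tau_mul_alt_word htau hE hfree _ Lw').
  by apply: (subalgM hE EZ); apply: cycle_shiftX_in.
have [_ alt_w [[/= Gx tx] _]] := Lw.
case: rest => [|[[k'|] y] rest] in Lw alt_w *; last by case: alt_w.
  rewrite /= mulr1; case: r lt_rl {Er} => [|r] lt_rl; first by rewrite expr0 mulr1.
  apply: (tau_residue_block_cycle_shiftX l_n (hGN Gx).2).
  by apply: contraTN lt_rl => /(dvdn_leq (ltn0Sn r)); rewrite -leqNgt.
have [d [w [Z [Lw' EZ wE]]]] := untwist_word (in_Lambda0_behead Lw) Er.
set W := word_prod ((true, d) :: w) in wE *.
have -> : word_prod [:: (None, x), (Some k', y) & rest] * u ^+ r = x * (u ^+ k' * W * Z).
  by rewrite -wE /= !mulrA.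
rewrite mulrA (tauC htau) 2!mulrA; apply: (tau_mul_alt_word htau hE hfree _ Lw').
by apply: (subalgM hE); [apply: (subalgM hE EZ); apply: (hGN Gx).1|apply: cycle_shiftX_in].
Qed.

Lemma free_family_twisted : (0 < l)%N -> free_family tau G.
Proof. by move=> l_gt0 w /tau_word_cycle_shiftX /(_ 0 l_gt0); rewrite expr0 mulr1. Qed.

End Twisting.

End MatrixUnits.

Theorem lemma3p1
  (R : realType) (n m : nat) (hn : (2 <= n)%N) (hm : (0 < m)%N)
  (alpha : 'I_m -> R)
  (halpha_pos : forall j, 0 < alpha j)
  (halpha_mono : forall i j : 'I_m, (i <= j)%N -> alpha i <= alpha j)
  (halpha_sum : \sum_(j < m) alpha j = 1)
  (A : algType R[i]) (star : A -> A) (nrm : A -> R) (tau : A -> R[i])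
  (hA : is_cstar_algebra star nrm)
  (htau : faithful_trace star tau)
  (* unital copy of C p_1 + ... + C p_m with tau(p_j) = alpha_j *)
  (p : 'I_m -> A)
  (hp_proj : forall j, star (p j) = p j /\ p j * p j = p j)
  (hp_orth : forall i j, i != j -> p i * p j = 0)
  (hp_sum : \sum_(j < m) p j = 1)
  (hp_tau : forall j, tau (p j) = (alpha j)%:C)
  (* unital copy of M_n (matrix units) with tau restricting to tr_n *)
  (e : 'I_n -> 'I_n -> A)
  (he_mul : forall i j k l, e i j * e k l = if j == k then e i l else 0)
  (he_star : forall i j, star (e i j) = e j i)
  (he_sum : \sum_(i < n) e i i = 1)
  (he_tau : forall i j, tau (e i j) = if i == j then (n%:R)^-1 else 0)
  (* the two copies are free in (A, tau) and generate A *)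
  (hfree : free_family tau (fun b : bool =>
      if b then cstar_gen star nrm (fun x => exists j, x = p j)
      else cstar_gen star nrm (fun x => exists i j, x = e i j)))
  (hgen : forall x, cstar_gen star nrm
      (fun y => (exists j, y = p j) \/ (exists i j, y = e i j)) x) :
  let u := \sum_(i < n) e i (ordS i) in
  let Pk := fun k : nat =>
      cstar_gen star nrm (fun x => exists j, x = u ^+ k * p j * star u ^+ k) in
  (* (i) *)
  (let F := fun o : option 'I_n =>
        match o with
        | Some k => Pk (nat_of_ord k)
        | None => cstar_gen star nrm (fun x => exists i, x = e i i)
        end in
   free_family tau F /\
   (forall w, in_Lambda0 tau F w ->
      forall r, (r < n)%N -> tau (word_prod w * u ^+ r) = 0)) /\
  (* (ii) *)
  (forall l : nat, (l %| n)%N -> (1 < l < n)%N ->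
   let G := fun o : option 'I_l =>
        match o with
        | Some k => Pk (nat_of_ord k)
        | None => cstar_gen star nrm (fun x =>
            (exists i, x = e i i) \/
            (exists t, (0 < t < n %/ l)%N /\ x = u ^+ (l * t)))
        end in
   free_family tau G /\
   (forall w, in_Lambda0 tau G w ->
      forall r, (r < l)%N -> tau (word_prod w * u ^+ r) = 0)).
Proof.
move=> u Pk.
have n_gt0 : (0 < n)%N by apply: leq_trans hn.
pose E := cstar_gen star nrm (fun x => exists i j, x = e i j).
have hEB l : closed_star_subalg star nrm (fun x => E x /\ residue_block e l x).
  exact: closed_star_subalgI (cstar_gen_closed _ _ _)
    (residue_block_closed hA he_mul he_star he_sum l).
have diag_in l i : E (e i i) /\ residue_block e l (e i i).
  by split; [apply: cstar_gen_mem; exists i, i | apply: residue_block_unit].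
have twisted_free := free_family_twisted hA he_mul he_star he_sum htau hfree n_gt0.
have tau_twisted_word := tau_word_cycle_shiftX hA he_mul he_star he_sum htau hfree n_gt0.
split.
  move=> F; have FN x : F None x -> E x /\ residue_block e n x.
    by apply: cstar_gen_min (hEB n) _ => _ [i ->].
  split; first exact: (twisted_free n (dvdnn n) F (fun _ _ => id) FN).
  exact: (tau_twisted_word n (dvdnn n) F (fun _ _ => id) FN).
move=> l l_n /andP [l_gt1 _] G.
have GN x : G None x -> E x /\ residue_block e l x.
  apply: cstar_gen_min (hEB l) _ => _ [[i ->]|[t [_ ->]]] //.
  split; first exact: cycle_shiftX_in.
  by apply: residue_block_cycle_shiftX => //; apply: dvdn_mulr.
split; first exact: (twisted_free l l_n G (fun _ _ => id) GN (ltnW l_gt1)).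
exact: (tau_twisted_word l l_n G (fun _ _ => id) GN).
Qed.
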